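(* Let $\langle S,L,\tau,\ell\rangle$ be a labelled Markov chain and $P\in\mathcal{P}_\tau$. The following are equivalent: (1) $P$ is optimal, i.e. $\gamma_P(s,t)=\delta_\tau(s,t)$ for all $s,t\in S$; (2) $\Gamma_P(\delta_\tau)=\delta_\tau$; (3) $\Gamma_P(\delta_\tau)\le\delta_\tau$ pointwise.
   Context: Labelled Markov chain: finite $S$, finite $L$, $\tau:S\to\mathcal{D}(S)$, $\ell:S\to L$. $\Omega(\mu,\nu)$ = couplings. $S^2_\Delta=\{(s,s)\}$, $S^2_1=\{(s,t)\mid\ell(s)\ne\ell(t)\}$. $\mathcal{P}_\tau$ = set of policies $P:S\times S\to\mathcal{D}(S\times S)$ with $P(s,t)\in\Omega(\tau(s),\tau(t))$ for $(s,t)\notin S^2_1$ and $P(s,t)$ the point mass at $(s,t)$ for $(s,t)\in S^2_1$. For $d:S\times S\to[0,1]$, $\Gamma_P(d)(s,t)=1$ if $(s,t)\in S^2_1$ and $\Gamma_P(d)(s,t)=\sum_{u,v}P(s,t)(u,v)\,d(u,v)$ otherwise; $\gamma_P$ is the least fixed point of $\Gamma_P$ (equal to the probability of reaching $S^2_1$ from $(s,t)$ in the Markov chain $\langle S\times S,P\rangle$). $\delta_\tau$ is the least fixed point of $\Delta_\tau$, where $\Delta_\tau(d)(s,t)=1$ if $\ell(s)\ne\ell(t)$ and $\inf_{\omega\in\Omega(\tau(s),\tau(t))}\sum_{u,v}\omega(u,v)d(u,v)$ otherwise; it is known that $\delta_\tau=\min_{P\in\mathcal{P}_\tau}\gamma_P$.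 *)

From HB Require Import structures.
From mathcomp Require Import all_boot all_order all_algebra.
From mathcomp Require Import classical_sets reals.
Set Implicit Arguments. Unset Strict Implicit. Unset Printing Implicit Defensive.
Import Order.TTheory GRing.Theory Num.Theory.
Local Open Scope classical_set_scope.
Local Open Scope ring_scope.

Section LMC.
Variables (R : realType) (S L : finType).

Definition is_distr (T : finType) (mu : T -> R) : Prop :=
  (forall x, 0 <= mu x) /\ \sum_(x : T) mu x = 1.

(* Omega(mu, nu): couplings of mu and nu, as distributions on S x S
   written in curried form w u v = w(u,v) *)
Definition coupling (mu nu : S -> R) (w : S -> S -> R) : Prop :=
  (forall u v, 0 <= w u v) /\
  (forall u, \sum_(v : S) w u v = mu u) /\
  (forall v, \sum_(u : S) w u v = nu v).

Definition diff_label (l : S -> L) (s t : S) : bool := l s != l t.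

(* P_tau: policies P (s,t) (u,v) written P s t u v *)
Definition is_policy (tau : S -> S -> R) (l : S -> L)
    (P : S -> S -> S -> S -> R) : Prop :=
  forall s t,
    (~~ diff_label l s t -> coupling (tau s) (tau t) (P s t)) /\
    (diff_label l s t -> forall u v, P s t u v = (((u == s) && (v == t)) : bool)%:R).

Definition GammaP (l : S -> L) (P : S -> S -> S -> S -> R)
    (d : S -> S -> R) : S -> S -> R :=
  fun s t => if diff_label l s t then 1
             else \sum_(u : S) \sum_(v : S) P s t u v * d u v.

Definition Delta (tau : S -> S -> R) (l : S -> L)
    (d : S -> S -> R) : S -> S -> R :=
  fun s t => if diff_label l s t then 1
             else inf [set \sum_(u : S) \sum_(v : S) w u v * d u v
                       | w in [set w | coupling (tau s) (tau t) w]].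

Definition unit_valued (d : S -> S -> R) : Prop :=
  forall u v, 0 <= d u v <= 1.

(* least fixed point of a monotone F on the complete lattice [0,1]^(S x S),
   given (Knaster--Tarski) as the pointwise infimum of its prefixed points *)
Definition lfp (F : (S -> S -> R) -> (S -> S -> R)) : S -> S -> R :=
  fun s t => inf [set d s t | d in
                  [set d | unit_valued d /\ forall u v, F d u v <= d u v]].

Definition gammaP (l : S -> L) (P : S -> S -> S -> S -> R) :=
  lfp (GammaP l P).

Definition delta (tau : S -> S -> R) (l : S -> L) := lfp (Delta tau l).

End LMC.

From HB Require Import structures.
From mathcomp Require Import all_boot all_order all_algebra.
From mathcomp Require Import classical_sets reals.
Import Order.TTheory GRing.Theory Num.Theory.
Set Implicit Arguments. Unset Strict Implicit.
Local Open Scope ring_scope.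
Local Open Scope classical_set_scope.

(* Since Delta_tau(d) <= Gamma_P(d) for every nonnegative d, the prefixed point
   gamma_P of Gamma_P is also a prefixed point of Delta_tau, whence
   delta_tau <= gamma_P.  Conversely, if Gamma_P(delta_tau) <= delta_tau, then
   delta_tau is a prefixed point of Gamma_P, whence gamma_P <= delta_tau; and
   once gamma_P = delta_tau, the fixed-point equation of gamma_P gives (2). *)

Section LeastFixedPoint.
Variables (R : realType) (S : finType).
Implicit Types (F : (S -> S -> R) -> (S -> S -> R)) (d : S -> S -> R).

Lemma lfp_le F d : unit_valued d -> (forall u v, F d u v <= d u v) ->
  forall s t, lfp F s t <= d s t.
Proof.
move=> d_unit Fd_le s t; apply: ge_inf; last by exists d.
by exists 0 => _ [d' [d'_unit _] <-]; case/andP: (d'_unit s t).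
Qed.

Lemma lfp_ge0 F d : unit_valued d -> (forall u v, F d u v <= d u v) ->
  forall s t, 0 <= lfp F s t.
Proof.
move=> d_unit Fd_le s t; apply: lb_le_inf; first by exists (d s t), d.
by move=> _ [d' [d'_unit _] <-]; case/andP: (d'_unit s t).
Qed.

Variable F : (S -> S -> R) -> (S -> S -> R).
Hypothesis F_unit : forall d, unit_valued d -> unit_valued (F d).
Hypothesis F_mono : forall d1 d2, (forall u v, d1 u v <= d2 u v) ->
  forall u v, F d1 u v <= F d2 u v.

Let one_unit : unit_valued (fun _ _ : S => 1 : R).
Proof. by move=> u v; rewrite ler01 lexx. Qed.

Let F_one_le : forall u v, F (fun _ _ => 1) u v <= 1.
Proof. by move=> u v; case/andP: (F_unit one_unit u v). Qed.

Lemma lfp_unit_valued : unit_valued (lfp F).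
Proof.
move=> s t; rewrite (lfp_ge0 one_unit F_one_le).
exact: (lfp_le one_unit F_one_le).
Qed.

Lemma lfp_prefixed s t : F (lfp F) s t <= lfp F s t.
Proof.
apply: lb_le_inf; first by exists 1, (fun _ _ => 1).
move=> _ [d [d_unit Fd_le] <-]; apply: le_trans (Fd_le s t).
exact/F_mono/lfp_le.
Qed.

Lemma lfp_fixed s t : F (lfp F) s t = lfp F s t.
Proof.
apply/eqP; rewrite eq_le lfp_prefixed /=.
by apply: lfp_le; [exact/F_unit/lfp_unit_valued | exact/F_mono/lfp_prefixed].
Qed.

End LeastFixedPoint.

Section OptimalPolicy.
Variables (R : realType) (S L : finType) (tau : S -> S -> R) (l : S -> L).
Variable P : S -> S -> S -> S -> R.
Hypothesis tau_distr : forall s, is_distr (tau s).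
Hypothesis P_policy : is_policy tau l P.

Lemma GammaP_unit_valued d : unit_valued d -> unit_valued (GammaP l P d).
Proof.
move=> d_unit s t; rewrite /GammaP; case: ifPn => st_same; first by rewrite ler01 lexx.
have [P_ge0 [P_row _]] := (P_policy s t).1 st_same.
apply/andP; split.
  apply: sumr_ge0 => u _; apply: sumr_ge0 => v _.
  by rewrite mulr_ge0 //; case/andP: (d_unit u v).
apply: le_trans (_ : \sum_u \sum_v P s t u v <= 1).
  apply: ler_sum => u _; apply: ler_sum => v _.
  by rewrite ler_piMr //; case/andP: (d_unit u v).
by under eq_bigr => u _ do rewrite P_row; rewrite (tau_distr s).2.
Qed.

Lemma GammaP_mono d1 d2 : (forall u v, d1 u v <= d2 u v) ->
  forall s t, GammaP l P d1 s t <= GammaP l P d2 s t.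
Proof.
move=> le_d s t; rewrite /GammaP; case: ifPn => st_same //.
have [P_ge0 _] := (P_policy s t).1 st_same.
by apply: ler_sum => u _; apply: ler_sum => v _; rewrite ler_wpM2l.
Qed.

Lemma Delta_le_GammaP d : (forall u v, 0 <= d u v) ->
  forall s t, Delta tau l d s t <= GammaP l P d s t.
Proof.
move=> d_ge0 s t; rewrite /Delta /GammaP; case: ifPn => st_same //.
apply: ge_inf; last by exists (P s t) => //; exact: (P_policy s t).1.
exists 0 => _ [w [w_ge0 _] <-].
by apply: sumr_ge0 => u _; apply: sumr_ge0 => v _; rewrite mulr_ge0.
Qed.

Let gammaP_unit : unit_valued (gammaP l P) :=
  lfp_unit_valued GammaP_unit_valued.

Lemma gammaP_fixed s t : GammaP l P (gammaP l P) s t = gammaP l P s t.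
Proof. exact: lfp_fixed GammaP_unit_valued GammaP_mono s t. Qed.

Let Delta_gammaP_le u v : Delta tau l (gammaP l P) u v <= gammaP l P u v.
Proof.
apply: le_trans (lfp_prefixed GammaP_unit_valued GammaP_mono u v).
by apply: Delta_le_GammaP => s t; case/andP: (gammaP_unit s t).
Qed.

Lemma delta_le_gammaP s t : delta tau l s t <= gammaP l P s t.
Proof. exact: lfp_le gammaP_unit Delta_gammaP_le s t. Qed.

Lemma delta_unit_valued : unit_valued (delta tau l).
Proof.
move=> s t; rewrite (lfp_ge0 gammaP_unit Delta_gammaP_le) /=.
by apply: le_trans (delta_le_gammaP s t) _; case/andP: (gammaP_unit s t).
Qed.

Lemma gammaP_eq_delta_of_prefixed :
  (forall s t, GammaP l P (delta tau l) s t <= delta tau l s t) ->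
  forall s t, gammaP l P s t = delta tau l s t.
Proof.
move=> prefixed s t; apply/eqP; rewrite eq_le delta_le_gammaP andbT.
exact: lfp_le delta_unit_valued prefixed s t.
Qed.

End OptimalPolicy.

Theorem mainTheorem14 (R : realType) (S L : finType)
    (tau : S -> S -> R) (l : S -> L)
    (Htau : forall s, is_distr (tau s))
    (P : S -> S -> S -> S -> R) (HP : is_policy tau l P) :
  ((forall s t, gammaP l P s t = delta tau l s t) <->
   (forall s t, GammaP l P (delta tau l) s t = delta tau l s t)) /\
  ((forall s t, GammaP l P (delta tau l) s t = delta tau l s t) <->
   (forall s t, GammaP l P (delta tau l) s t <= delta tau l s t)).
Proof.
have optimal_fixed : (forall s t, gammaP l P s t = delta tau l s t) ->
    forall s t, GammaP l P (delta tau l) s t = delta tau l s t.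
  move=> optimal s t; rewrite -optimal -(gammaP_fixed Htau HP).
  by apply/eqP; rewrite eq_le !(GammaP_mono HP) // => u v; rewrite optimal.
have prefixed_optimal := gammaP_eq_delta_of_prefixed Htau HP.
split; split.
- exact: optimal_fixed.
- by move=> fixed; apply: prefixed_optimal => s t; rewrite fixed.
- by move=> fixed s t; rewrite fixed.
- by move=> prefixed; apply/optimal_fixed/prefixed_optimal.
Qed.
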